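(* Let $(\Omega,\mathcal G,\alpha)$ be a dynamical system and let $\omega\in\Omega$ be a non-isolated point whose orbit $\{\alpha(g)(\omega):g\in\mathcal G\}$ is dense in $\Omega$. Then $\omega$ is pseudoergodic.
   Context: $(\mathcal G,+)$ is a countable discrete group (written additively, not necessarily abelian). A dynamical system $(\Omega,\mathcal G,\alpha)$ consists of a compact metric space $\Omega$ and a map $\alpha$ from $\mathcal G$ to the homeomorphisms of $\Omega$ with $\alpha(g+h)=\alpha(g)\circ\alpha(h)$. A sequence $(g_n)$ satisfies $g_n\to\infty$ if it eventually leaves every finite subset of $\mathcal G$. $L(\omega)=\{\nu\in\Omega:\exists (g_n),\ g_n\to\infty,\ \alpha(g_n)(\omega)\to\nu\}$; $\omega$ is pseudoergodic if $L(\omega)=\Omega$. *)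

From HB Require Import structures.
From mathcomp Require Import all_boot all_order all_algebra.
From mathcomp Require Import all_classical all_reals all_analysis.
Set Implicit Arguments. Unset Strict Implicit. Unset Printing Implicit Defensive.
Import Order.TTheory GRing.Theory Num.Theory.
Local Open Scope classical_set_scope.

Definition is_group (G : Type) (add : G -> G -> G) (zero : G) (opp : G -> G) :=
  [/\ forall a b c, add a (add b c) = add (add a b) c,
      forall a, add zero a = a, forall a, add a zero = a,
      forall a, add (opp a) a = zero & forall a, add a (opp a) = zero].

Definition homeomorphism (T : topologicalType) (f : T -> T) :=
  continuous f /\ exists g : T -> T, [/\ continuous g, cancel f g & cancel g f].

Definition is_action (G : Type) (add : G -> G -> G) (T : topologicalType)
  (alpha : G -> T -> T) :=
  (forall g, homeomorphism (alpha g)) /\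
  (forall g h, alpha (add g h) = alpha g \o alpha h).

Definition tends_to_infty (G : eqType) (gs : nat -> G) :=
  forall s : seq G, \forall n \near \oo, gs n \notin s.

Definition Lset (G : eqType) (T : topologicalType) (alpha : G -> T -> T)
  (omega : T) : set T :=
  [set nu | exists gs : nat -> G, tends_to_infty gs /\
      (fun n => alpha (gs n) omega) @ \oo --> nu].

Definition pseudoergodic (G : eqType) (T : topologicalType)
  (alpha : G -> T -> T) (omega : T) := Lset alpha omega = setT.

From HB Require Import structures.
From mathcomp Require Import all_boot all_order all_algebra.
From mathcomp Require Import all_classical all_reals all_analysis.
Import Order.TTheory GRing.Theory Num.Theory.
Local Open Scope classical_set_scope.
Local Open Scope ring_scope.

(* A dense orbit through a non-isolated point leaves no room for isolated
   points, so in the T1 space Omega every neighbourhood of nu, minus finitely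
   many orbit points, still meets the orbit.  Listing G through pickle, at
   step n we may thus choose g_n with alpha g_n omega within 1/(n+1) of nu and
   avoiding the first n elements of G; then g_n -> oo and alpha g_n omega -> nu. *)

Lemma closure_eqT_dense {T : topologicalType} {S : set T} :
  closure S = [set: T] -> dense S.
Proof.
move=> clS O [x Ox] oO.
have : closure S x by rewrite clS.
by move/(_ O); rewrite setIC; apply; exact: open_nbhs_nbhs.
Qed.

Lemma open_set1_preimage {S T : topologicalType} {f : S -> T} {x : S} :
  continuous f -> injective f -> open [set f x] -> open [set x].
Proof.
move=> /continuousP fcont finj ofx.
suff <- : f @^-1` [set f x] = [set x] by exact: fcont.
by apply/seteqP; split => [y /finj|y ->].
Qed.

Lemma open_set1_isolated {T : topologicalType} {x : T} :
  open [set x] -> isolated [set: T] x.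
Proof.
move=> ox; split; first by rewrite in_setT.
by exists [set x]; [exact: open_nbhs_nbhs | rewrite setIT].
Qed.

Lemma perfect_open_setD_seq (T : topologicalType) (U : set T) (s : seq T) :
  accessible_space T -> perfect_set [set: T] ->
  open U -> U !=set0 -> U `\` [set` s] !=set0.
Proof.
move=> T1 /perfectTP_ex perfectT; elim: s U => [|y s IHs] U oU U0.
  by case: U0 => x Ux; exists x.
have oUy : open (U `\ y).
  by apply: openI => //; rewrite openC; exact: accessible_closed_set1.
have Uy0 : U `\ y !=set0.
  have [x [x' [Ux Ux' xx']]] := perfectT U oU U0.
  have [<-|xy] := eqVneq x y.
    by exists x'; split => // x'x; rewrite x'x eqxx in xx'.
  by exists x; split => // /eqP; rewrite (negPf xy).
have [z [[Uz zy] zs]] := IHs _ oUy Uy0.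
by exists z; split => //=; rewrite in_cons => /orP[/eqP/zy|/zs].
Qed.

Section DenseOrbit.
Context {I : eqType} {T : topologicalType} {f : I -> T -> T} {w : T}.
Hypothesis f_cont : forall i, continuous (f i).
Hypothesis f_inj : forall i, injective (f i).
Hypothesis w_not_isolated : ~ isolated [set: T] w.
Hypothesis orbit_dense : closure (range (fun i => f i w)) = [set: T].

Lemma dense_orbit_perfect : perfect_set [set: T].
Proof.
apply/perfectTP => x ox.
have [z [-> [i _ iwx]]] := closure_eqT_dense orbit_dense _ (ex_intro _ x erefl) ox.
apply: w_not_isolated; apply: open_set1_isolated.
by rewrite -iwx in ox; exact: open_set1_preimage (f_cont i) (f_inj i) ox.
Qed.

Lemma dense_orbit_avoid (s : seq I) {y : T} {V : set T} :
  accessible_space T -> nbhs y V -> exists2 i, V (f i w) & i \notin s.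
Proof.
move=> T1 yV.
pose W := V° `\` [set` map (f^~ w) s].
have oW : open W.
  apply: openI; first exact: open_interior.
  by rewrite openC; apply: (accessible_finite_set_closed.1 T1); exact: finite_seq.
have W0 : W !=set0.
  apply: perfect_open_setD_seq => //; first exact: dense_orbit_perfect.
    exact: open_interior.
  by exists y.
have [z [[Vz zs] [i _ iwz]]] := closure_eqT_dense orbit_dense _ W0 oW.
rewrite -iwz in Vz zs; exists i; first exact: interior_subset.
by apply/negP; apply: contra_not zs => /(map_f (f^~ w)).
Qed.

End DenseOrbit.

Definition pickled_below (T : countType) (n : nat) : seq T :=
  pmap pickle_inv (iota 0 n).

Lemma mem_pickled_below (T : countType) (x : T) (n : nat) :
  (x \in pickled_below T n) = (pickle x < n)%N.
Proof.
rewrite mem_pmap; apply/mapP/idP => [[k] | xn].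
  rewrite mem_iota => /andP[_ kn] xk.
  suff -> : pickle x = k by [].
  by rewrite -(@pickle_invK T k) -xk.
by exists (pickle x); rewrite ?mem_iota ?pickleK_inv.
Qed.

Lemma tends_to_infty_pickle (G : countType) (gs : nat -> G) :
  (forall n, n <= pickle (gs n))%N -> tends_to_infty gs.
Proof.
move=> gs_ge s; exists (\max_(x <- s) pickle x).+1 => // n /= sn.
apply/negP => sgn.
have gs_big : (pickle (gs n) <= \max_(x <- s) pickle x)%N.
  exact: (leq_bigmax_seq (P := predT)).
by have := leq_trans (leq_trans sn (gs_ge n)) gs_big; rewrite ltnn.
Qed.

Lemma cvg_ball_natSinv (R : archiRealFieldType) (M : pseudoMetricType R)
    (u : nat -> M) (x : M) :
  (forall n, ball x n.+1%:R^-1 (u n)) -> u @ \oo --> x.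
Proof.
move=> u_near; apply/cvg_ballP => e e0.
near=> n; apply: le_ball (u_near n); apply: ltW.
by near: n; exact: (near_infty_natSinv_lt (PosNum e0)).
Unshelve. all: by end_near.
Qed.

Theorem lemma3p5 (G : countType) (add : G -> G -> G) (zero : G) (opp : G -> G)
  (R : realType) (Omega : metricType R) (alpha : G -> Omega -> Omega)
  (omega : Omega) :
  is_group add zero opp ->
  compact [set: Omega] ->
  is_action add alpha ->
  ~ isolated [set: Omega] omega ->
  closure (range (fun g => alpha g omega)) = [set: Omega] ->
  pseudoergodic alpha omega.
Proof.
move=> _ _ [alpha_homeo _] omega_not_isolated orbit_dense.
have alpha_cont g : continuous (alpha g) by have [] := alpha_homeo g.
have alpha_inj g : injective (alpha g).
  by have [_ [h [_ gK _]]] := alpha_homeo g; exact: can_inj gK.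
have T1 : accessible_space Omega by exact/hausdorff_accessible/metric_hausdorff.
apply/seteqP; split => // nu _.
have inv_gt0 n : 0 < n.+1%:R^-1 :> R by rewrite invr_gt0 ltr0Sn.
have step n : exists g, ball nu n.+1%:R^-1 (alpha g omega) /\ g \notin pickled_below G n.
  have [g] := dense_orbit_avoid alpha_cont alpha_inj omega_not_isolated orbit_dense
    (pickled_below G n) T1 (nbhsx_ballx nu _ (inv_gt0 n)).
  by exists g.
have [gs gsP] := choice step.
exists gs; split; last by apply: cvg_ball_natSinv => n; case: (gsP n).
by apply: tends_to_infty_pickle => n; rewrite leqNgt -mem_pickled_below; case: (gsP n).
Qed.
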